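(* Let $k\ge 2$ and define the formal power series $D^{(k)}(x,y)=\sum_{n\ge 2}\sum_{j=k}^{(k-1)n} d^{(k)}_{n,j}\,x^j y^n\in\mathbb{Q}[x][[y]]$. Then, as formal power series in $y$ with coefficients in $\mathbb{Q}[x]$, $$(1+x^k y-x)\,D^{(k)}(x,y)=x^k y\,S^{(k)}(y)-x^{2k-1}y^2,$$ i.e. $D^{(k)}(x,y)=\dfrac{x^k yS^{(k)}(y)-x^{2k-1}y^2}{1+x^ky-x}$.
   Context: For $i\ge 1$, $s^{(k)}_i=\frac{k-1}{ki-1}\binom{ki-1}{i-1}$, and $S^{(k)}(z)=\sum_{i\ge1}s^{(k)}_i z^i$. For $n\ge2$ and $k\le j\le (k-1)n$, $d^{(k)}_{n,j}=\binom{kn-2-j}{n-2}-\sum_{\ell=1}^{\,n-\lceil j/(k-1)\rceil} s^{(k)}_\ell\binom{k(n-\ell)-1-j}{n-\ell-1}$; equivalently $d^{(k)}_{n,j}$ is the number of lattice paths with unit south and west steps from $((k-1)n,n-1)$ to $(j,1)$ that never touch the line $(k-1)y=x$. *)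

From mathcomp Require Import all_boot all_order all_algebra.
Set Implicit Arguments. Unset Strict Implicit. Unset Printing Implicit Defensive.
Import GRing.Theory Num.Theory.
Local Open Scope ring_scope.

Definition s_k (k i : nat) : rat :=
  ((k - 1)%:R / (k * i - 1)%:R) * ('C(k * i - 1, i - 1))%:R.

(* d^{(k)}_{n,j}, with ceil(j/(k-1)) = (j + k - 2) %/ (k - 1). *)
Definition d_k (k n j : nat) : rat :=
  ('C(k * n - 2 - j, n - 2))%:R
  - \sum_(1 <= l < (n - (j + k - 2) %/ (k - 1)).+1)
        s_k k l * ('C(k * (n - l) - 1 - j, n - l - 1))%:R.

(* Formal power series in y with coefficients in Q[x]: coefficient sequences. *)
Definition fps := nat -> {poly rat}.

Definition fps_mul (f g : fps) : fps :=
  fun n => \sum_(i < n.+1) f i * g (n - i)%N.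

Definition fps_sub (f g : fps) : fps := fun n => f n - g n.

Definition fps_mono (c : {poly rat}) (m : nat) : fps :=
  fun n => if n == m then c else 0.

Definition S_k (k : nat) : fps :=
  fun i => if (1 <= i)%N then (s_k k i)%:P else 0.

Definition D_k (k : nat) : fps :=
  fun n => if (2 <= n)%N then
             \sum_(k <= j < (k - 1) * n + 1) d_k k n j *: 'X^j
           else 0.

Definition denom_k (k : nat) : fps :=
  fun n => if n == 0%N then 1 - 'X else if n == 1%N then 'X^k else 0.

From mathcomp Require Import all_boot all_order all_algebra.
From mathcomp Require Import zify ring.
From Stdlib Require Import FunctionalExtensionality.
Import GRing.Theory Num.Theory.
Local Open Scope ring_scope.

(* Comparing coefficients of y^n x^i, the identity says that d_{n,i-1} = d_{n,i} + d_{n-1,i-k}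
   inside the support, with the boundary values d_{n,k} = s_{n-1}, d_{n,(k-1)n} = 1,
   d_{2,j} = 1, and d_{n,j} = 0 for 0 < j < k.  The recurrence is Pascal's rule applied
   termwise to the binomials defining d (once the summation range is adjusted, the
   extra terms being zero).  The boundary values at j <= k come from the convolution
   identity  (1 - S(y)) * sum_m C(km+q-1, m) y^m = sum_m C(km+q-2, m) y^m,  proved by
   induction on the degree: Pascal's rule moves q down by one, and q = 1 is reduced
   to q = k through the closed form of s_{m+1}. *)

Lemma fps_mulS_deg1 (f g : fps) n : (forall i, (2 <= i)%N -> f i = 0) ->
  fps_mul f g n.+1 = f 0%N * g n.+1 + f 1%N * g n.
Proof.
move=> f_deg1; rewrite /fps_mul !big_ord_recl big1 ?addr0 => [|i _]; last first.
  by rewrite f_deg1 ?mul0r.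
by rewrite subn0 subn1.
Qed.

Section FixedArity.
Variable k : nat.
Hypothesis k_ge2 : (2 <= k)%N.

Definition bink (r q m : nat) : rat := ('C(k * m + q - r, m))%:R.

Lemma bink0 r q : bink r q 0 = 1.
Proof. by rewrite /bink bin0. Qed.

Lemma bink_pascal r q m : (r <= k)%N ->
  bink r q.+1 m.+1 = bink r q m.+1 + bink r (q + k) m.
Proof.
move=> r_le_k; rewrite /bink -natrD.
have -> : (k * m.+1 + q.+1 - r = (k * m + q + k - r).+1)%N by lia.
have -> : (k * m.+1 + q - r = k * m + q + k - r)%N by lia.
by rewrite addnA binS.
Qed.

Lemma bink_absorb m : bink 1 1 m.+1 = k%:R * bink 1 k m.
Proof.
rewrite /bink -natrM addnK; congr _%:R.
apply/eqP; rewrite -(eqn_pmul2l (ltn0Sn m)) -mul_bin_diag.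
have -> : (k * m + k - 1 = (k * m.+1).-1)%N by lia.
by rewrite mulnCA mulnA.
Qed.

Lemma s_k_succ n : s_k k n.+1 = k%:R * bink 2 k n - bink 2 1 n.+1.
Proof.
rewrite /s_k /bink subSS subn0.
set K := (k * n.+1 - 1)%N.
have K_gt0 : (0 < K)%N by rewrite /K; lia.
have -> : (k * n + k - 2 = K.-1)%N by rewrite /K; lia.
have -> : (k * n.+1 + 1 - 2 = K)%N by rewrite /K; lia.
have binK_succ : 'C(K, n.+1) = ((k - 1) * 'C(K, n))%N.
  apply/eqP; rewrite -(eqn_pmul2l (ltn0Sn n)) mul_bin_left mulnA.
  by rewrite (_ : K - n = n.+1 * (k - 1))%N // /K; nia.
have binK_pred : (K * 'C(K.-1, n) = n.+1 * (k - 1) * 'C(K, n))%N.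
  by rewrite mul_bin_diag binK_succ mulnA.
have Kr_neq0 : (K%:R : rat) != 0 by rewrite pnatr_eq0 -lt0n.
have -> : ('C(K.-1, n))%:R = (n.+1 * (k - 1))%:R * ('C(K, n))%:R / (K%:R : rat).
  by rewrite -natrM -binK_pred natrM mulrC mulKf.
have eK : (K%:R : rat) = k%:R * n.+1%:R - 1 by rewrite /K natrB ?natrM //; lia.
rewrite binK_succ !natrM eK in Kr_neq0 *.
rewrite natrB; last lia.
field.
by move: Kr_neq0; rewrite -add1n natrD.
Qed.

Lemma s_k1 : s_k k 1 = 1.
Proof. by rewrite /s_k muln1 subnn bin0 mulr1 divff // pnatr_eq0; lia. Qed.

Definition coef_1subS (l : nat) : rat := if l == 0%N then 1 else - s_k k l.

Definition conv_1subS (n q : nat) : rat :=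
  \sum_(0 <= l < n.+1) coef_1subS l * bink 1 q (n - l).

Lemma conv_1subS0 q : conv_1subS 0 q = bink 2 q 0.
Proof. by rewrite /conv_1subS big_nat1 /= mul1r !bink0. Qed.

Lemma conv_1subS_pascal n q :
  conv_1subS n.+1 q.+1 = conv_1subS n.+1 q + conv_1subS n (q + k).
Proof.
rewrite /conv_1subS big_nat_recr //= [X in _ = X + _]big_nat_recr //=.
rewrite subnn !bink0 addrAC; congr (_ + _).
rewrite -big_split /=; apply: eq_big_nat => l /andP [_ lt_ln].
by rewrite subSn // bink_pascal ?mulrDr //; lia.
Qed.

Lemma conv_1subS_anchor n :
  conv_1subS n k = bink 2 k n -> conv_1subS n.+1 1 = bink 2 1 n.+1.
Proof.
move=> conv_nk; rewrite /conv_1subS big_nat_recr //= subnn bink0 mulr1.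
have -> : \sum_(0 <= l < n.+1) coef_1subS l * bink 1 1 (n.+1 - l)
        = k%:R * conv_1subS n k.
  rewrite /conv_1subS mulr_sumr; apply: eq_big_nat => l /andP [_ lt_ln].
  by rewrite subSn // bink_absorb mulrCA.
by rewrite conv_nk /coef_1subS s_k_succ opprB addrCA subrr addr0.
Qed.

Lemma conv_1subSE n q : conv_1subS n q = bink 2 q n.
Proof.
elim: n q => [|n IHn] q; first exact: conv_1subS0.
have conv_n1 := conv_1subS_anchor n (IHn k).
have conv_n0 : conv_1subS n.+1 0 = bink 2 0 n.+1.
  apply: (addIr (conv_1subS n k)); rewrite -(add0n k) -conv_1subS_pascal.
  by rewrite conv_n1 IHn -bink_pascal.
elim: q => [|[|q] IHq] //.
by rewrite conv_1subS_pascal IHq IHn -bink_pascal.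
Qed.

Lemma sum_s_bink n q :
  \sum_(1 <= l < n.+2) s_k k l * bink 1 q (n.+1 - l) = ('C(k * n.+1 + q - 2, n))%:R.
Proof.
have := conv_1subSE n.+1 q.
rewrite /conv_1subS big_nat_recl // big_add1 /= subn0 mul1r.
under eq_big_nat => l _ do rewrite mulNr.
rewrite sumrN => /eqP; rewrite subr_eq addrC -subr_eq => /eqP <-.
rewrite /bink (_ : k * n.+1 + q - 1 = (k * n.+1 + q - 2).+1)%N; last nia.
by rewrite binS natrD addrAC subrr add0r.
Qed.

Lemma sum_s_bin n i : (1 <= i <= k)%N ->
  \sum_(1 <= l < n.+2) s_k k l * ('C(k * (n.+2 - l) - 1 - i, n.+2 - l - 1))%:R
  = ('C(k * n.+2 - 2 - i, n))%:R.
Proof.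
move=> /andP [i_gt0 i_le_k].
rewrite (_ : (k * n.+2 - 2 - i = k * n.+1 + (k - i) - 2)%N); last nia.
rewrite -sum_s_bink; apply: eq_big_nat => l /andP [l_gt0 l_lt].
rewrite /bink; congr (_ * ('C(_, _))%:R); nia.
Qed.

Definition ceil_k (j : nat) : nat := ((j + k - 2) %/ (k - 1))%N.

Lemma ceil_kP j : (j <= (k - 1) * ceil_k j < j + k - 1)%N.
Proof.
have k1_gt0 : (0 < k - 1)%N by rewrite subn_gt0.
rewrite /ceil_k; have := divn_eq (j + k - 2) (k - 1).
have := ltn_pmod (j + k - 2) k1_gt0.
set c := ((j + k - 2) %/ (k - 1))%N; set r := ((j + k - 2) %% (k - 1))%N; nia.
Qed.

Lemma ceil_k_eq j c : (j <= (k - 1) * c < j + k - 1)%N -> ceil_k j = c.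
Proof.
move=> /andP [lo hi]; rewrite /ceil_k.
rewrite (_ : j + k - 2 = c * (k - 1) + (j + k - 2 - (k - 1) * c))%N; last nia.
by rewrite divnMDl ?divn_small ?addn0; nia.
Qed.

Definition d_tail (n j u : nat) : rat :=
  \sum_(1 <= l < u.+1) s_k k l * ('C(k * (n - l) - 1 - j, n - l - 1))%:R.

Lemma d_kE n j :
  d_k k n j = ('C(k * n - 2 - j, n - 2))%:R - d_tail n j (n - ceil_k j).
Proof. by []. Qed.

Lemma d_k_small N i : (1 <= i < k)%N -> d_k k N.+2 i = 0.
Proof.
move=> /andP [i_gt0 i_lt_k].
rewrite d_kE (ceil_k_eq _ 1); last nia.
by rewrite subn1 /d_tail sum_s_bin // ?subSS ?subn0 ?subrr //; lia.
Qed.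

Lemma d_k_first N : d_k k N.+2 k = s_k k N.+1.
Proof.
rewrite d_kE (ceil_k_eq _ 2) ?subSS ?subn0; last nia.
have := sum_s_bin N k; rewrite leqnn andbT => /(_ (ltnW k_ge2)).
rewrite big_nat_recr // subSn // subnn muln1 subnn bin0 mulr1 => <-.
by rewrite /d_tail addrAC subrr add0r.
Qed.

Lemma d_k_last n : (2 <= n)%N -> d_k k n ((k - 1) * n) = 1.
Proof.
move=> n_ge2; rewrite d_kE (ceil_k_eq _ n) ?subnn; last nia.
rewrite /d_tail big_geq // subr0 (_ : k * n - 2 - (k - 1) * n = n - 2)%N ?binn //.
nia.
Qed.

Lemma d_k_two j : (k <= j <= (k - 1) * 2)%N -> d_k k 2 j = 1.
Proof.
move=> /andP [k_le_j j_le]; rewrite d_kE (ceil_k_eq _ 2) ?subnn; last nia.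
by rewrite /d_tail big_geq // subr0 bin0.
Qed.

Lemma bin_d_pascal r m j : (r < m)%N -> (k <= j)%N -> (j + r <= k * m)%N ->
  'C(k * m - r - (j - 1), m - r)
  = ('C(k * m - r - j, m - r) + 'C(k * (m - 1) - r - (j - k), m - 1 - r))%N.
Proof.
move=> r_lt_m k_le_j j_le.
rewrite (_ : k * m - r - (j - 1) = (k * m - r - j).+1)%N; last lia.
rewrite (_ : k * (m - 1) - r - (j - k) = k * m - r - j)%N; last nia.
by rewrite (_ : m - r = (m - 1 - r).+1)%N ?binS //; lia.
Qed.

(* The extra terms vanish: there the top of the binomial is below its bottom. *)
Lemma d_tail_ext n j u v : (u <= v)%N -> (v + 2 <= n)%N ->
  ((k - 1) * (n - u.+1) < j)%N -> d_tail n j v = d_tail n j u.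
Proof.
move=> u_le_v v_le j_gt; rewrite /d_tail (big_cat_nat _ (n := u.+1)) //=.
rewrite [X in _ + X]big1_seq ?addr0 // => l.
rewrite mem_index_iota => /andP [u_lt_l l_le_v].
have : ((k - 1) * (n - l) <= (k - 1) * (n - u.+1))%N by apply: leq_mul => //; lia.
by move=> le_m; rewrite bin_small ?mulr0 //; nia.
Qed.

Lemma d_tail_pascal n j u : (k < j)%N -> (u + 2 <= n)%N ->
  (j <= (k - 1) * (n - u) + 1)%N ->
  d_tail n (j - 1) u = d_tail n j u + d_tail (n - 1) (j - k) u.
Proof.
move=> k_lt_j u_le j_le; rewrite /d_tail -big_split.
apply: eq_big_nat => l /andP [_ l_le_u] /=.
have : ((k - 1) * (n - u) <= (k - 1) * (n - l))%N by apply: leq_mul => //; lia.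
move=> le_m; rewrite (_ : n - 1 - l = n - l - 1)%N; last lia.
by rewrite -mulrDr -natrD -bin_d_pascal //; nia.
Qed.

Lemma d_k_rec n j : (3 <= n)%N -> (k < j <= (k - 1) * n)%N ->
  d_k k n (j - 1) = d_k k n j + d_k k (n - 1) (j - k).
Proof.
move=> n_ge3 /andP [k_lt_j j_le].
have [cj_lo cj_hi] := andP (ceil_kP j).
have [c_lo c_hi] := andP (ceil_kP (j - 1)).
have c_pred : ceil_k (j - 1) = (ceil_k (j - k)).+1.
  by apply: ceil_k_eq; have := ceil_kP (j - k); nia.
set c := ceil_k (j - 1) in c_lo c_hi c_pred *.
have c_ge2 : (2 <= c)%N by nia.
have c_le_cj : (c <= ceil_k j)%N by nia.
have cj_le_n : (ceil_k j <= n)%N by nia.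
rewrite !d_kE (_ : n - 1 - ceil_k (j - k) = n - c)%N; last lia.
rewrite -/c -(d_tail_ext n j (n - ceil_k j) (n - c)); [|lia|lia|]; last first.
  by rewrite (_ : n - (n - ceil_k j).+1 = (ceil_k j).-1)%N; nia.
rewrite d_tail_pascal ?bin_d_pascal ?natrD; [ring|lia|lia|nia|lia|nia|nia].
Qed.

Lemma coef_D_k n j : (D_k k n)`_j =
  if ((2 <= n) && (k <= j <= (k - 1) * n))%N then d_k k n j else 0.
Proof.
rewrite /D_k; case: (2 <= n)%N; last by rewrite coef0.
rewrite coef_sum /=; under eq_bigr do rewrite coefZ coefXn.
have [j_in | j_out] := boolP (k <= j <= (k - 1) * n)%N.
  rewrite (bigD1_seq j) ?mem_index_iota ?addn1 ?ltnS ?iota_uniq //= eqxx mulr1.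
  by rewrite big1 ?addr0 // => l /negbTE; rewrite eq_sym => ->; rewrite mulr0.
rewrite big1_seq // => l; rewrite mem_index_iota addn1 ltnS => l_in.
case: eqP => [j_eq|]; rewrite ?mulr0 //.
by move: j_out; rewrite j_eq; case/and3P: l_in => _ -> ->.
Qed.

Lemma coef_D_k_out n j : ((j < k) || ((k - 1) * n < j))%N -> (D_k k n)`_j = 0.
Proof. by rewrite coef_D_k; case: ifP => // /and3P []; lia. Qed.

Lemma coef_D_k_in n j : (2 <= n)%N -> (0 < j <= (k - 1) * n)%N ->
  (D_k k n)`_j = d_k k n j.
Proof.
move=> n_ge2 /andP [j_gt0 j_le]; rewrite coef_D_k n_ge2 j_le andbT /=.
case: leqP => // j_lt_k.
by rewrite (_ : n = n.-2.+2) ?d_k_small ?j_gt0 //; lia.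
Qed.

Lemma D_k_rec N :
  (1 - 'X) * D_k k N.+3 + 'X^k * D_k k N.+2 = 'X^k * (s_k k N.+2)%:P.
Proof.
apply/polyP => i; rewrite mulrBl mul1r !(coefD, coefN, coefXM, coefXnM) coefC.
set P := ((k - 1) * N.+3)%N.
have [i_lt_k | k_le_i] := ltnP i k.
  rewrite !coef_D_k_out ?i_lt_k ?(leq_ltn_trans (leq_pred i) i_lt_k) //.
  by rewrite if_same subr0 addr0.
case: (i =P 0%N) => [|i_neq0]; first lia.
have [<- | k_neq_i] := eqVneq k i.
  rewrite subnn coef_D_k_in ?d_k_first; [|lia|nia].
  by rewrite !coef_D_k_out ?subr0 ?addr0 //; lia.
rewrite (_ : i - k == 0 = false)%N; last lia.
have [i_le_P | P_lt_i] := leqP i P.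
  rewrite !coef_D_k_in -?subn1 ?d_k_rec; [|nia..].
  by rewrite subn1 /=; ring.
rewrite (coef_D_k_out _ i) ?P_lt_i ?orbT // sub0r.
have [P1_lt_i | i_le_P1] := ltnP P.+1 i.
  by rewrite !coef_D_k_out ?addNr //; apply/orP; right; nia.
rewrite (_ : i = P.+1) /=; last lia.
rewrite (_ : P.+1 - k = (k - 1) * N.+2)%N; last nia.
by rewrite /P !coef_D_k_in ?d_k_last ?addNr //; nia.
Qed.

Lemma D_k_two_rec : (1 - 'X) * D_k k 2%N = 'X^k - 'X^(2 * k - 1).
Proof.
rewrite /D_k mulr_sumr.
rewrite (telescope_sumr_eq (fun j : nat => - 'X^j : {poly rat})); last 2 first.
- lia.
- move=> j /andP [k_le_j j_lt]; rewrite d_k_two ?scale1r; last lia.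
  by rewrite exprS mulrBl mul1r opprK addrC.
by rewrite opprK addrC (_ : (k - 1) * 2 + 1 = 2 * k - 1)%N //; lia.
Qed.
End FixedArity.

Theorem mainTheorem3 (k : nat) (hk : (2 <= k)%N) :
  fps_mul (denom_k k) (D_k k) =
  fps_sub (fps_mul (fps_mono ('X^k) 1) (S_k k))
          (fps_mono ('X^(2 * k - 1)) 2).
Proof.
apply: functional_extensionality => -[|n]; rewrite /fps_sub.
  by rewrite /fps_mul !big_ord1 /D_k /fps_mono /S_k /= !mulr0 subr0.
rewrite !fps_mulS_deg1; [|by case=> [|[]]..].
rewrite /denom_k /fps_mono /S_k /= mul0r add0r.
case: n => [|[|N]] /=.
- by rewrite /D_k /= !mulr0 addr0 subr0.
- by rewrite {2}/D_k /= mulr0 addr0 D_k_two_rec // s_k1 // mulr1.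
- by rewrite D_k_rec // subr0.
Qed.
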